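(* For every $D\in\mathrm{SL}(d+1,\mathbb R)\setminus\mathrm{SO}(d+1)$ there exist $n>0$, $R_0,R_1,\dots,R_n\in\mathrm{SO}(d+1)$ and $\alpha_1,\dots,\alpha_n\in\{-1,+1\}$ such that $$R_0D^{\alpha_1}R_1D^{\alpha_2}R_2\cdots R_{n-1}D^{\alpha_n}R_n=\mathrm{diag}(r_1,\dots,r_{d+1})$$ with $0<r_{d+1}<\min_{1\le i\le d}r_i$ and $\max_{1<i\le d}r_i^d<r_1\cdots r_d$. *)

From HB Require Import structures.
From mathcomp Require Import all_boot all_order all_algebra.
From mathcomp Require Import reals.
Set Implicit Arguments. Unset Strict Implicit. Unset Printing Implicit Defensive.
Import Order.TTheory GRing.Theory Num.Theory.
Local Open Scope ring_scope.

Definition mxSL (R : realType) (m : nat) (A : 'M[R]_m) : Prop := \det A = 1.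

Definition mxSO (R : realType) (m : nat) (A : 'M[R]_m) : Prop :=
  A *m A^T = 1%:M /\ \det A = 1.

(* D^alpha for alpha in {-1,+1}: true encodes +1, false encodes -1. *)
Definition mxpow_sign (R : realType) (m : nat) (D : 'M[R]_m) (a : bool) : 'M[R]_m :=
  if a then D else invmx D.

(* The word R_0 D^{a_1} R_1 D^{a_2} R_2 ... D^{a_n} R_n,
   with Rs : 'I_n.+1 -> matrices (R_0..R_n) and a : 'I_n -> bool (a_1..a_n). *)
Definition word_prod (R : realType) (m n : nat) (D : 'M[R]_m)
    (Rs : 'I_n.+1 -> 'M[R]_m) (a : 'I_n -> bool) : 'M[R]_m :=
  Rs ord0 *m \big[mulmx/1%:M]_(i < n) (mxpow_sign D (a i) *m Rs (lift ord0 i)).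

(* 1. Real spectral theorem (sym_orthogonal_diag), by induction on the size:
      a real symmetric matrix has a real eigenvector (a complex eigenvalue is
      forced to be real by symmetry), and a Householder reflection completes
      it to an orthonormal basis.
   2. Hence the singular value decomposition D = U diag(s) V with U, V
      orthogonal and s > 0 (svd_orthogonal), with U, V in SO(d+1) when
      det D = 1 (svd_SO).
   3. Conjugation by elements of SO(d+1) permutes the entries of diagonal
      matrices (SO_permutes_diag), so for any permutations pi, tau some word
      R0 D R1 D^-1 R2 is diag(s_(pi i) / s_(tau i)) (ratio_word).
   4. Since D is not in SO(d+1), two singular values differ, s_q < s_p
      (distinct_singular_values).  Taking pi, tau that agree except at the
      first and last index, where they are (p, q) and (q, p)
      (swapping_perms), the word is diag(s_p/s_q, 1, ..., 1, s_q/s_p), which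
      satisfies the required inequalities (profile_inequalities). *)

From HB Require Import structures.
From mathcomp Require Import all_boot all_order all_algebra.
From mathcomp Require Import reals.
From mathcomp Require Import fingroup perm.
From mathcomp.real_closed Require Import complex.
From mathcomp Require Import ring lra.
Set Implicit Arguments. Unset Strict Implicit. Unset Printing Implicit Defensive.
Import Order.TTheory GRing.Theory Num.Theory.
Local Open Scope ring_scope.

Local Notation cRe := complex.Re.
Local Notation cIm := complex.Im.

Section RealSpectral.
Variable R : realType.
Local Notation re v := (map_mx (@cRe R) v).
Local Notation im v := (map_mx (@cIm R) v).

Lemma dot_self_ge0 n (x : 'rV[R]_n) : 0 <= (x *m x^T) 0 0.
Proof.
by rewrite mxE; apply: sumr_ge0 => k _; rewrite mxE -expr2; exact: sqr_ge0.
Qed.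

Lemma dot_self_eq0 n (x : 'rV[R]_n) : (x *m x^T) 0 0 = 0 -> x = 0.
Proof.
rewrite mxE => /psumr_eq0P sq0; apply/rowP => k; rewrite mxE.
have /eqP : x 0 k * x^T k 0 = 0.
  by apply: sq0 => // i _; rewrite mxE -expr2; exact: sqr_ge0.
by rewrite mxE -expr2 sqrf_eq0 => /eqP.
Qed.

Lemma dotC n (x y : 'rV[R]_n) : (x *m y^T) 0 0 = (y *m x^T) 0 0.
Proof.
have -> : (x *m y^T) 0 0 = (x *m y^T)^T 0 0 by rewrite [RHS]mxE.
by rewrite trmx_mul trmxK.
Qed.

Lemma dotBl n (x y z : 'rV[R]_n) :
  ((x - y) *m z^T) 0 0 = (x *m z^T) 0 0 - (y *m z^T) 0 0.
Proof. by rewrite mulmxBl [LHS]mxE [X in _ + X]mxE. Qed.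

Lemma dotBr n (x y z : 'rV[R]_n) :
  (x *m (y - z)^T) 0 0 = (x *m y^T) 0 0 - (x *m z^T) 0 0.
Proof. by rewrite linearB mulmxBr [LHS]mxE [X in _ + X]mxE. Qed.

Lemma ReM (x y : R[i]) : cRe (x * y) = cRe x * cRe y - cIm x * cIm y.
Proof. by case: x => a b; case: y => c e. Qed.

Lemma ImM (x y : R[i]) : cIm (x * y) = cRe x * cIm y + cIm x * cRe y.
Proof. by case: x => a b; case: y => c e. Qed.

Lemma Re_sum n (f : 'I_n -> R[i]) : cRe (\sum_i f i) = \sum_i cRe (f i).
Proof. by apply: (big_morph (@cRe R)) => // -[? ?] [? ?]. Qed.

Lemma Im_sum n (f : 'I_n -> R[i]) : cIm (\sum_i f i) = \sum_i cIm (f i).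
Proof. by apply: (big_morph (@cIm R)) => // -[? ?] [? ?]. Qed.

Lemma complex_eigen_parts n (S : 'M[R]_n) (v : 'rV[R[i]]_n) (z : R[i]) :
  v *m map_mx (real_complex R) S = z *: v ->
  re v *m S = cRe z *: re v - cIm z *: im v /\
  im v *m S = cIm z *: re v + cRe z *: im v.
Proof.
move=> vS; split; apply/rowP => j; have /rowP /(_ j) := vS; rewrite !mxE.
- move=> /(congr1 (@cRe R)); rewrite Re_sum ReM => <-; apply: eq_bigr => k _.
  by rewrite !mxE ReM /= mulr0 subr0.
- move=> /(congr1 (@cIm R)); rewrite Im_sum ImM addrC => <-.
  by apply: eq_bigr => k _; rewrite !mxE ImM /= mulr0 add0r.
Qed.

(* A real symmetric matrix has a real eigenvector: take a complex eigenvector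
   p + i q; symmetry of S forces b ('[p] + '[q]) = 0, so the eigenvalue is
   real and one of p, q is a nonzero real eigenvector. *)
Lemma sym_real_eigenvector n (S : 'M[R]_n.+1) : S^T = S ->
  exists a (p : 'rV[R]_n.+1), p != 0 /\ p *m S = a *: p.
Proof.
move=> Ssym.
have [z /eigenvalueP [v vS vN0]] :=
  eigenvalue_closed (map_mx (real_complex R) S) (ltn0Sn n).
have [pS qS] := complex_eigen_parts vS.
set p := map_mx _ v in pS qS; set q := map_mx _ v in pS qS.
have v0 : p = 0 -> q = 0 -> v = 0.
  move=> /rowP p0 /rowP q0; apply/rowP => k; move: (p0 k) (q0 k).
  by rewrite !mxE; case: (v 0 k) => ? ? /= -> ->.
have S_sym_form : (p *m S *m q^T) 0 0 = (q *m S *m p^T) 0 0.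
  have -> : (p *m S *m q^T) 0 0 = (p *m S *m q^T)^T 0 0 by rewrite [RHS]mxE.
  by rewrite !trmx_mul trmxK Ssym mulmxA.
have Im_z_norm : cIm z * ((p *m p^T) 0 0 + (q *m q^T) 0 0) = 0.
  move: S_sym_form (dotC p q); rewrite pS qS mulmxBl mulmxDl -!scalemxAl !mxE.
  by move=> + pq; rewrite pq; lra.
have Im_z0 : cIm z = 0.
  apply/eqP; move/eqP: Im_z_norm; rewrite mulf_eq0 => /orP[// | ].
  rewrite paddr_eq0 ?dot_self_ge0 // => /andP[/eqP/dot_self_eq0 p0].
  move=> /eqP/dot_self_eq0 q0.
  by move: vN0; rewrite v0 ?eqxx.
have [p0|pN0] := eqVneq p 0.
  exists (cRe z), q; split; first by apply: contra vN0 => /eqP q0; rewrite v0.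
  by rewrite qS Im_z0 scale0r add0r.
by exists (cRe z), p; rewrite pS Im_z0 scale0r subr0.
Qed.

(* Every unit vector u is the first row of an orthogonal matrix: take the
   Householder reflection exchanging u and the first basis vector e. *)
Lemma orthogonal_first_row n (u : 'rV[R]_n.+1) : (u *m u^T) 0 0 = 1 ->
  exists Q : 'M[R]_n.+1, Q *m Q^T = 1%:M /\ row 0 Q = u.
Proof.
move=> uu; pose e : 'rV[R]_n.+1 := delta_mx 0 0.
have ee : (e *m e^T) 0 0 = 1 by rewrite trmx_delta mul_delta_mx mxE !eqxx.
have eu : (e *m u^T) 0 0 = u 0 0 by rewrite -rowE !mxE.
pose w := u - e.
have [w0|wN0] := eqVneq w 0.
  exists 1%:M; rewrite trmx1 mulmx1 row1; split => //.
  by apply/esym/eqP; rewrite -subr_eq0 -/w w0.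
pose c := (w *m w^T) 0 0.
have cE : c = 2 - 2 * u 0 0.
  by rewrite /c /w !(dotBl, dotBr) uu ee eu dotC eu; lra.
have cN0 : c != 0 by apply: contra wN0 => /eqP /dot_self_eq0 ->.
pose W := w^T *m w.
have WW : W *m W = c *: W.
  rewrite /W mulmxA -(mulmxA w^T) [w *m w^T]mx11_scalar mul_mx_scalar.
  by rewrite -scalemxAl.
pose Q := 1%:M - (2 / c) *: W.
have QT : Q^T = Q by rewrite /Q linearB /= trmx1 linearZ /= /W trmx_mul trmxK.
exists Q; rewrite QT; split.
  rewrite /Q mulmxBl mulmxBr mulmx1 mul1mx mulmxBr mulmx1.
  rewrite -scalemxAl -scalemxAr WW !scalerA.
  have -> : 2 / c * (2 / c) * c = 2 / c + 2 / c by field.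
  by rewrite scalerDl opprB addrK subrK.
have ew : (e *m w^T) 0 0 = u 0 0 - 1 by rewrite /w dotBr eu ee.
have coef : 2 / c * (u 0 0 - 1) = -1.
  by rewrite cE; field; rewrite -cE.
rewrite rowE -/e /Q mulmxBr mulmx1 -scalemxAr /W mulmxA [e *m w^T]mx11_scalar.
by rewrite mul_scalar_mx scalerA ew coef scaleN1r opprK /w addrC subrK.
Qed.

(* Deflation: a symmetric S is orthogonally similar to a block-diagonal
   matrix diag(a, S'), by an orthogonal Q whose first row is a unit
   eigenvector u of S (then the first row of Q S Q^T is u S Q^T = a e_0). *)
Lemma sym_deflate n (S : 'M[R]_(1 + n)) : S^T = S ->
  exists Q : 'M[R]_(1 + n), Q *m Q^T = 1%:M /\
    ursubmx (Q *m S *m Q^T) = 0 /\ dlsubmx (Q *m S *m Q^T) = 0.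
Proof.
move=> Ssym; have [a [p [pN0 pS]]] := sym_real_eigenvector Ssym.
have pp0 : 0 < (p *m p^T) 0 0.
  by rewrite lt0r dot_self_ge0 andbT; apply: contra pN0 => /eqP /dot_self_eq0 ->.
pose s := Num.sqrt ((p *m p^T) 0 0).
have s0 : 0 < s by rewrite sqrtr_gt0.
have ss : s ^+ 2 = (p *m p^T) 0 0 by rewrite sqr_sqrtr // ltW.
pose u := s^-1 *: p.
have uu : (u *m u^T) 0 0 = 1.
  rewrite /u linearZ /= -scalemxAl -scalemxAr [LHS]mxE [X in _ * X]mxE -ss.
  by field; exact: lt0r_neq0.
have uS : u *m S = a *: u by rewrite /u -scalemxAl pS !scalerA mulrC.
have [Q [QQ Q0]] := orthogonal_first_row uu.
exists Q; split => //.
have [T TE] : {T : 'M[R]_(1 + n) | T = Q *m S *m Q^T} by exists (Q *m S *m Q^T).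
rewrite -TE; have TT : T^T = T by rewrite TE !trmx_mul trmxK Ssym mulmxA.
have T0 j : T 0 j = a * (j == 0)%:R.
  have -> : T 0 j = row 0 T 0 j by rewrite [RHS]mxE.
  rewrite TE !row_mul Q0 uS -scalemxAl -Q0 -row_mul QQ.
  by rewrite row1 mxE mxE eqxx eq_sym.
have ur0 : ursubmx T = 0.
  apply/matrixP => i j; rewrite !mxE ord1.
  have -> : lshift n (0 : 'I_1) = 0 by apply: val_inj.
  by rewrite T0; case: eqP => [/(congr1 val)|]; rewrite ?mulr0.
by split; last rewrite -TT -trmx_ursub ur0 trmx0.
Qed.

Lemma sym_orthogonal_diag n (S : 'M[R]_n) : S^T = S ->
  exists Q : 'M[R]_n, Q *m Q^T = 1%:M /\ is_diag_mx (Q *m S *m Q^T).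
Proof.
elim: n S => [|n IH] S Ssym.
  exists 1%:M; split; first by rewrite trmx1 mulmx1.
  by apply/is_diag_mxP => -[].
have [Q [QQ [ur0 dl0]]] := sym_deflate Ssym.
have [T TE] : {T : 'M[R]_(1 + n) | T = Q *m S *m Q^T} by exists (Q *m S *m Q^T).
rewrite -TE in ur0 dl0.
have T'sym : (drsubmx T)^T = drsubmx T.
  by rewrite trmx_drsub TE !trmx_mul trmxK Ssym mulmxA.
have [Q' [Q'Q' Q'd]] := IH _ T'sym.
pose B : 'M[R]_(1 + n) := block_mx 1%:M 0 0 Q'.
have BT : B^T = block_mx 1%:M 0 0 Q'^T by rewrite tr_block_mx trmx1 !trmx0.
have BB : B *m B^T = 1%:M.
  rewrite BT /B mulmx_block !mulmx0 !mul0mx !mulmx1 !addr0 !add0r Q'Q'.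
  by rewrite -scalar_mx_block.
have BTB : is_diag_mx (B *m T *m B^T).
  rewrite -[T]submxK ur0 dl0 BT /B !mulmx_block !mulmx0 !mul0mx !mulmx1 !mul1mx.
  by rewrite !addr0 !add0r mul0mx is_diag_block_mx // !eqxx /= mx11_is_diag.
exists (B *m Q); split.
  by rewrite trmx_mul mulmxA -(mulmxA B) QQ mulmx1.
have -> : B *m Q *m S *m (B *m Q)^T = B *m T *m B^T.
  by rewrite TE trmx_mul !mulmxA.
exact: BTB.
Qed.

(* Singular value decomposition of an invertible real matrix:
   D = U diag(s) V with U, V orthogonal and s > 0.  Diagonalize D^T D as
   V^T diag(l) V; its eigenvalues l are positive, s = sqrt l, and
   U = D V^T diag(s)^-1 is orthogonal. *)
Lemma svd_orthogonal n (D : 'M[R]_n) : \det D != 0 ->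
  exists (U V : 'M[R]_n) (s : 'rV[R]_n), U *m U^T = 1%:M /\ V *m V^T = 1%:M /\
    (forall i, 0 < s 0 i) /\ D = U *m diag_mx s *m V.
Proof.
move=> dD.
have [V [VV /diag_mxP [l lE]]] :
    exists Q : 'M[R]_n, Q *m Q^T = 1%:M /\ is_diag_mx (Q *m (D^T *m D) *m Q^T).
  by apply: sym_orthogonal_diag; rewrite trmx_mul trmxK.
have VTV : V^T *m V = 1%:M by apply: mulmx1C.
pose M := D *m V^T.
have MM : M^T *m M = diag_mx l by rewrite /M trmx_mul trmxK -lE !mulmxA.
have l_ge0 i : 0 <= l 0 i.
  have /matrixP/(_ i i) := MM; rewrite [RHS]mxE eqxx mulr1n => <-.
  by rewrite mxE; apply: sumr_ge0 => k _; rewrite mxE -expr2; exact: sqr_ge0.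
have l_neq0 i : l 0 i != 0.
  have dV : \det V != 0.
    by have [Vu _] := mulmx1_unit VV; rewrite -unitfE -unitmxE.
  have : \det (diag_mx l) != 0.
    by rewrite -MM det_mulmx det_tr /M det_mulmx det_tr !mulf_neq0.
  by rewrite det_diag (bigD1 i) //= mulf_eq0 negb_or => /andP[].
pose s := \row_i Num.sqrt (l 0 i).
have s_gt0 i : 0 < s 0 i by rewrite mxE sqrtr_gt0 lt0r l_neq0 l_ge0.
have ss i : s 0 i * s 0 i = l 0 i by rewrite mxE -expr2 sqr_sqrtr.
clearbody s.
pose t := \row_i (s 0 i)^-1.
have ts : diag_mx (\row_j (t 0 j * s 0 j)) = 1%:M.
  rewrite -diag_const_mx; congr diag_mx; apply/rowP => j; rewrite !mxE.
  by rewrite mulVf // lt0r_neq0.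
pose U := M *m diag_mx t.
have UTU : U^T *m U = 1%:M.
  rewrite /U trmx_mul tr_diag_mx mulmxA -(mulmxA _ M^T) MM !mulmx_diag.
  rewrite -ts; congr diag_mx; apply/rowP => j; rewrite !mxE -ss.
  by field; rewrite lt0r_neq0.
exists U, V, s; split; first exact: mulmx1C.
do 2!split => //.
by rewrite /U -(mulmxA M) mulmx_diag ts mulmx1 /M -mulmxA VTV mulmx1.
Qed.
End RealSpectral.

Section SpecialOrthogonal.
Variables (R : realType) (m : nat).
Implicit Types (A B : 'M[R]_m.+1) (w : 'rV[R]_m.+1).

Lemma SO_mul A B : mxSO A -> mxSO B -> mxSO (A *m B).
Proof.
move=> [AA dA] [BB dB]; split; last by rewrite det_mulmx dA dB mulr1.
by rewrite trmx_mul mulmxA -(mulmxA A) BB mulmx1.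
Qed.

Lemma SO_tr A : mxSO A -> mxSO A^T.
Proof.
by move=> [AA dA]; split; [rewrite trmxK; apply: mulmx1C | rewrite det_tr].
Qed.

Lemma orthogonal_det A : A *m A^T = 1%:M -> \det A = 1 \/ \det A = -1.
Proof.
move=> /(congr1 determinant); rewrite det_mulmx det_tr det1 -expr2 => /eqP.
by rewrite sqrf_eq1 => /orP[] /eqP; [left|right].
Qed.

Definition flip_first : 'M[R]_m.+1 := diag_mx (\row_i (if i == 0 then -1 else 1)).

Lemma flip_first_tr : flip_first^T = flip_first.
Proof. exact: tr_diag_mx. Qed.

Lemma flip_first_conj_diag w : flip_first *m diag_mx w *m flip_first = diag_mx w.
Proof.
rewrite /flip_first !mulmx_diag; congr diag_mx; apply/rowP => j; rewrite !mxE.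
by case: (j == 0); rewrite ?mulN1r ?mulrN1 ?opprK ?mul1r ?mulr1.
Qed.

Lemma flip_first_sqr : flip_first *m flip_first = 1%:M.
Proof.
rewrite /flip_first mulmx_diag -diag_const_mx; congr diag_mx.
by apply/rowP => j; rewrite !mxE; case: (j == 0); rewrite ?mulN1r ?opprK ?mul1r.
Qed.

Lemma det_flip_first : \det flip_first = -1.
Proof.
rewrite det_diag (bigD1 0) //= big1 ?mulr1; first by rewrite mxE eqxx.
by move=> i /negPf Hi; rewrite mxE Hi.
Qed.

Lemma flip_first_SO A : A *m A^T = 1%:M -> \det A = -1 ->
  mxSO (flip_first *m A) /\ mxSO (A *m flip_first).
Proof.
move=> AA dA; have dF : \det (flip_first *m A) = 1.
  by rewrite det_mulmx det_flip_first dA mulrNN mulr1.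
split; split; rewrite ?trmx_mul ?flip_first_tr //.
- by rewrite mulmxA -(mulmxA _ A) AA mulmx1 flip_first_sqr.
- by rewrite mulmxA -(mulmxA A) flip_first_sqr mulmx1.
- by rewrite det_mulmx mulrC -det_mulmx.
Qed.

(* Permuting the entries of a diagonal matrix is a conjugation by a matrix
   of SO(m+1): a permutation matrix, corrected by the flip if it is odd. *)
Lemma SO_permutes_diag (pi : 'S_m.+1) : exists P : 'M[R]_m.+1,
  mxSO P /\ forall w, P *m diag_mx w *m P^T = diag_mx (\row_i w 0 (pi i)).
Proof.
pose P0 : 'M[R]_m.+1 := perm_mx pi.
have P0P0 : P0 *m P0^T = 1%:M by rewrite /P0 tr_perm_mx -perm_mxM mulgV perm_mx1.
have P0w w : P0 *m diag_mx w *m P0^T = diag_mx (\row_i w 0 (pi i)).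
  rewrite /P0 tr_perm_mx -col_permE -row_permE.
  by apply/matrixP => i j; rewrite !mxE (inj_eq perm_inj).
have [dP0|dP0] := orthogonal_det P0P0; first by exists P0.
exists (flip_first *m P0); split; first by have [] := flip_first_SO P0P0 dP0.
move=> w; rewrite trmx_mul flip_first_tr !mulmxA -(mulmxA _ P0).
by rewrite -(mulmxA _ (P0 *m diag_mx w)) P0w -mulmxA mulmxA flip_first_conj_diag.
Qed.

(* Singular value decomposition with special orthogonal factors, for a
   matrix of determinant 1: if the orthogonal factors of svd_orthogonal have
   determinant -1, both are corrected by the flip, which commutes with the
   diagonal factor. *)
Lemma svd_SO (D : 'M[R]_m.+1) : \det D = 1 ->
  exists (U V : 'M[R]_m.+1) (s : 'rV[R]_m.+1), mxSO U /\ mxSO V /\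
    (forall i, 0 < s 0 i) /\ D = U *m diag_mx s *m V.
Proof.
move=> dD; have dD0 : \det D != 0 by rewrite dD oner_neq0.
have [U [V [s [UU [VV [s0 DE]]]]]] := svd_orthogonal dD0.
have ps : 0 < \prod_i s 0 i by apply: prodr_gt0 => i _; exact: s0.
have dE : \det U * \prod_i s 0 i * \det V = 1.
  by rewrite -det_diag -!det_mulmx -DE.
have [dV|dV] := orthogonal_det VV; have [dU|dU] := orthogonal_det UU.
- by exists U, V, s.
- by move: dE; rewrite dU dV; lra.
- by move: dE; rewrite dU dV; lra.
exists (U *m flip_first), (flip_first *m V), s; split; last split.
- by have [] := flip_first_SO UU dU.
- by have [] := flip_first_SO VV dV.
by split => //; rewrite DE -[in LHS](flip_first_conj_diag s) !mulmxA.
Qed.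
End SpecialOrthogonal.

Section Word.
Variables (R : realType) (m : nat).

Lemma invmx_svd (D U V : 'M[R]_m.+1) (s : 'rV[R]_m.+1) :
  mxSO U -> mxSO V -> (forall i, 0 < s 0 i) -> D = U *m diag_mx s *m V ->
  invmx D = V^T *m diag_mx (\row_i (s 0 i)^-1) *m U^T.
Proof.
move=> [UU _] [VV _] s0 DE.
set X := V^T *m _ *m U^T.
have DX : D *m X = 1%:M.
  rewrite DE /X !mulmxA -(mulmxA _ V) VV mulmx1 -(mulmxA U) mulmx_diag.
  have -> : \row_j (s 0 j * (\row_i (s 0 i)^-1) 0 j) = const_mx 1.
    by apply/rowP => j; rewrite !mxE divff // lt0r_neq0.
  by rewrite diag_const_mx mulmx1 UU.
have [Du _] := mulmx1_unit DX.
by rewrite -[invmx D]mulmx1 -DX mulmxA mulVmx // mul1mx.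
Qed.

(* The basic two-letter word: for any permutations pi, tau of the indices,
   some word R0 D R1 D^-1 R2 with R0, R1, R2 in SO(m+1) is the diagonal
   matrix of the ratios s_(pi i) / s_(tau i) of singular values, namely
   (P U^T) D (V^T P^T T V) D^-1 (U T^T) where P, T realize pi, tau. *)
Lemma ratio_word (D U V : 'M[R]_m.+1) (s : 'rV[R]_m.+1) (pi tau : 'S_m.+1) :
  mxSO U -> mxSO V -> (forall i, 0 < s 0 i) -> D = U *m diag_mx s *m V ->
  exists Rs : 'I_3 -> 'M[R]_m.+1, (forall k, mxSO (Rs k)) /\
    word_prod D Rs (fun i : 'I_2 => val i == 0%N) =
    diag_mx (\row_i (s 0 (pi i) / s 0 (tau i))).
Proof.
move=> USO VSO s0 DE; have Dinv := invmx_svd USO VSO s0 DE.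
have [[UU _] [VV _]] := (USO, VSO).
have [P [PSO PE]] := SO_permutes_diag R pi.
have [T [TSO TE]] := SO_permutes_diag R tau.
exists (nth 0 [:: P *m U^T; V^T *m P^T *m T *m V; U *m T^T]); split.
  case=> [[|[|[|k]]] Hk] //=; repeat apply: SO_mul; by [|apply: SO_tr].
rewrite /word_prod big_ord_recl big_ord_recl big_ord0 /= mulmx1 Dinv DE.
have UTU : U^T *m U = 1%:M by apply: mulmx1C.
rewrite !mulmxA -!(mulmxA _ U^T U) UTU -!(mulmxA _ V V^T) VV !mulmx1.
rewrite -(mulmxA _ T) -(mulmxA _ (T *m _)) PE TE mulmx_diag.
by congr diag_mx; apply/rowP => i; rewrite !mxE.
Qed.
End Word.

(* A matrix of determinant 1 outside SO(m+1) has two distinct singular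
   values: otherwise they all equal some c with c^(m+1) = 1, so c = 1 and
   D = U V would be special orthogonal. *)
Lemma distinct_singular_values (R : realType) m (D U V : 'M[R]_m.+1)
    (s : 'rV[R]_m.+1) :
  \det D = 1 -> ~ mxSO D -> mxSO U -> mxSO V -> (forall i, 0 < s 0 i) ->
  D = U *m diag_mx s *m V -> exists p q, s 0 q < s 0 p.
Proof.
move=> dD notSO USO VSO s0 DE.
have [p _ s_max] := @arg_maxP _ _ _ ord0 xpredT (fun i => s 0 i) isT.
have [q _ s_min] := @arg_minP _ _ _ ord0 xpredT (fun i => s 0 i) isT.
exists p, q; rewrite lt_def; apply/andP; split; last exact: s_max.
apply: contra_notN notSO => /eqP spq.
have s_const i : s 0 i = s 0 p.
  by apply/le_anti/andP; split; [exact: s_max | rewrite spq; exact: s_min].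
have det_s : \det (diag_mx s) = s 0 p ^+ m.+1.
  by rewrite det_diag (eq_bigr (fun=> s 0 p)) ?prodr_const ?card_ord.
have sp1 : s 0 p = 1.
  apply/eqP; rewrite -(pexpr_eq1 (n := m.+1)) ?ltW //; apply/eqP.
  by rewrite -det_s -dD DE !det_mulmx USO.2 VSO.2 mul1r mulr1.
have -> : D = U *m V.
  rewrite DE (_ : s = const_mx 1) ?diag_const_mx ?mulmx1 //.
  by apply/rowP => i; rewrite !mxE s_const.
exact: SO_mul.
Qed.

Lemma swapping_perms m (p q : 'I_m.+1) : p != q ->
  exists pi tau : 'S_m.+1, [/\ pi 0 = p, pi ord_max = q, tau 0 = q,
    tau ord_max = p & forall i, i != 0 -> i != ord_max -> tau i = pi i].
Proof.
move=> pq; have m0 : (0 < m)%N.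
  by case: m p q pq => // p q; rewrite (ord1 p) (ord1 q) eqxx.
have zmax : (0 : 'I_m.+1) != ord_max by rewrite -val_eqE /= eq_sym -lt0n.
pose e := tperm 0 p q.
have ze : (0 : 'I_m.+1) != e.
  by apply: contra pq => /eqP/(congr1 (tperm 0 p)); rewrite tpermL tpermK => ->.
have fix0 : tperm ord_max e 0 = 0 by rewrite tpermD // eq_sym.
pose pi := (tperm ord_max e * tperm 0 p)%g.
have pi0 : pi 0 = p by rewrite permM fix0 tpermL.
have pimax : pi ord_max = q by rewrite permM tpermL tpermK.
exists pi, (tperm 0 ord_max * pi)%g; split => //.
- by rewrite permM tpermL.
- by rewrite permM tpermR.
- by move=> i i0 imax; rewrite permM tpermD // eq_sym.
Qed.

Lemma profile_inequalities (R : realType) m (r : 'I_m.+1 -> R) :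
  1 < r 0 -> 0 < r ord_max < 1 -> (forall i, i != 0 -> i != ord_max -> r i = 1) ->
  [/\ 0 < r ord_max, forall i : 'I_m.+1, (i < m)%N -> r ord_max < r i &
    forall i : 'I_m.+1, (1 <= i)%N -> (i < m)%N ->
      r i ^+ m < \prod_(j < m) r (widen_ord (leqnSn m) j)].
Proof.
move=> r0 /andP[rmax0 rmax1] r1.
have imax (i : 'I_m.+1) : (i < m)%N -> i != ord_max.
  by rewrite -val_eqE /= neq_ltn => ->.
have m0 : (0 < m)%N.
  have : (0 : 'I_m.+1) != ord_max.
    by apply: contraTneq (lt_trans rmax1 r0) => ->; rewrite ltxx.
  by rewrite -val_eqE /= eq_sym -lt0n.
split => // [i im | i i1 im].
  have [-> | i0] := eqVneq i 0; first exact: lt_trans r0.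
  by rewrite (r1 i) ?imax.
have i0 : i != 0 by rewrite -val_eqE /= -lt0n.
rewrite (r1 i) ?imax // expr1n (bigD1 (Ordinal m0)) //= big1 ?mulr1.
- by rewrite (_ : widen_ord _ _ = 0) //; apply: val_inj.
- move=> j j0; apply: r1; last exact: (imax (widen_ord _ j) (ltn_ord j)).
  by rewrite -val_eqE /=; apply: contra j0 => /eqP j0; apply/eqP/val_inj.
Qed.

Theorem mainTheorem16 (R : realType) (d : nat) (D : 'M[R]_d.+1) :
  mxSL D -> ~ mxSO D ->
  exists (n : nat) (Rs : 'I_n.+1 -> 'M[R]_d.+1) (a : 'I_n -> bool)
         (r : 'I_d.+1 -> R),
    (0 < n)%N /\
    (forall k, mxSO (Rs k)) /\
    word_prod D Rs a = diag_mx (\row_i r i) /\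
    (* 0 < r_{d+1} < min_{1<=i<=d} r_i  (0-based: r ord_max vs r i, i < d) *)
    0 < r ord_max /\
    (forall i : 'I_d.+1, (i < d)%N -> r ord_max < r i) /\
    (* max_{1<i<=d} r_i^d < r_1 ... r_d  (0-based: 1 <= i < d) *)
    (forall i : 'I_d.+1, (1 <= i)%N -> (i < d)%N ->
       r i ^+ d < \prod_(j < d) r (widen_ord (leqnSn d) j)).
Proof.
move=> dD notSO.
have [U [V [s [USO [VSO [s0 DE]]]]]] := svd_SO dD.
have [p [q lt_qp]] := distinct_singular_values dD notSO USO VSO s0 DE.
have pq : p != q by apply: contraTneq lt_qp => ->; rewrite ltxx.
have [pi [tau [pi0 pimax tau0 taumax tau_pi]]] := swapping_perms pq.
have [Rs [RsSO word]] := ratio_word pi tau USO VSO s0 DE.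
pose r i := s 0 (pi i) / s 0 (tau i).
have [sp0 sq0] := (s0 p, s0 q).
have [] := @profile_inequalities R d r.
- by rewrite /r pi0 tau0 ltr_pdivlMr // mul1r.
- by rewrite /r pimax taumax divr_gt0 // ltr_pdivrMr // mul1r.
- by move=> i i0 imax; rewrite /r tau_pi // divff // lt0r_neq0.
move=> rmax0 rmax_lt r_prod.
exists 2%N, Rs, (fun i : 'I_2 => val i == 0%N), r.
split; first by []; split; first exact: RsSO; split; first exact: word.
by split; last split.
Qed.
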